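(* Let $x$ be a real number with $x\notin[-1,1]$. For $n\in\mathbb N$ and integers $d\geq 1$ let $S_{n,d}(x)=\sum_{k=0}^nU_{d-1}(T_{(d+1)^k}(x))\prod_{j=0}^k\frac{1}{U_d(T_{(d+1)^j}(x))}$. Then the limit $\lim_{n+d\rightarrow\infty}S_{n,d}(x)$ exists (i.e. there is a real $L$ such that for every $\varepsilon>0$ there exists $N$ with $|S_{n,d}(x)-L|<\varepsilon$ whenever $n\in\mathbb N$, $d\ge1$, $n+d\geq N$) and it equals $\mathrm{sign}(x)\left(|x|-\sqrt{x^2-1}\right)$, the root closest to zero of $X^2-2xX+1$.
   Context: $T_n$ and $U_n$ denote the Chebyshev polynomials of the first and second kind, defined by $T_0=1$, $T_1=x$, $T_{n+1}=2xT_n-T_{n-1}$ and $U_0=1$, $U_1=2x$, $U_{n+1}=2xU_n-U_{n-1}$ for $n\geq1$. $\mathrm{sign}(x)\in\{\pm1\}$ is the sign of $x$. *)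

From Stdlib Require Import Reals.
Open Scope R_scope.

Fixpoint cheb_pair (p0 p1 : R -> R) (n : nat) (x : R) : R * R :=
  match n with
  | O => (p0 x, p1 x)
  | S m => let (a, b) := cheb_pair p0 p1 m x in (b, 2 * x * b - a)
  end.

Definition chebT (n : nat) (x : R) : R := fst (cheb_pair (fun _ => 1) (fun y => y) n x).
Definition chebU (n : nat) (x : R) : R := fst (cheb_pair (fun _ => 1) (fun y => 2 * y) n x).

Definition sgn (x : R) : R := if Rlt_dec x 0 then -1 else 1.

Fixpoint prod_R (f : nat -> R) (k : nat) : R :=
  match k with
  | O => f O
  | S m => prod_R f m * f (S m)
  end.

Definition S_nd (n d : nat) (x : R) : R :=
  sum_f_R0 (fun k =>
     chebU (d - 1) (chebT ((d + 1) ^ k) x) *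
     prod_R (fun j => / chebU d (chebT ((d + 1) ^ j) x)) k) n.

From Stdlib Require Import Reals Lra Lia Psatz.
Open Scope R_scope.

(* Write x = (t + 1/t)/2 with 0 < |t| < 1; t is the root of X^2 - 2xX + 1 named in
   the statement. Then T_m(x) = (t^m + t^-m)/2 and U_m(x) = (t^(m+1) - t^-(m+1))/(t - 1/t),
   so with a_j = t^((d+1)^j) the product over j telescopes to (t - 1/t)/(a_(k+1) - 1/a_(k+1))
   and the k-th summand becomes (t - 1/t)(h(a_(k+1)) - h(a_k)) for h(v) = v^2/(1 - v^2).
   Hence S_(n,d)(x) = t + (t - 1/t) h(u) with u = t^((d+1)^(n+1)), whose distance to t is
   at most |u| <= |t|^(n+d). *)

Definition joukowski (s : R) : R := (s + / s) / 2.

Lemma cheb_pair_spec (p0 p1 : R -> R) (y : R) (F : nat -> R) :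
  F 0%nat = p0 y -> F 1%nat = p1 y ->
  (forall n, F (S (S n)) = 2 * y * F (S n) - F n) ->
  forall n, cheb_pair p0 p1 n y = (F n, F (S n)).
Proof.
  intros H0 H1 Hrec n; induction n as [|n IH]; simpl.
  - now rewrite H0, H1.
  - now rewrite IH, Hrec.
Qed.

Lemma sub_inv_neq0 (s : R) : s <> 0 -> s * s <> 1 -> s - / s <> 0.
Proof.
  intros Hs Hs1 E; apply Hs1.
  replace (s * s) with (s * (s - / s) + 1) by (field; exact Hs).
  rewrite E; ring.
Qed.

Lemma chebT_joukowski (s : R) (n : nat) : s <> 0 ->
  chebT n (joukowski s) = (s ^ n + / s ^ n) / 2.
Proof.
  intros Hs; unfold chebT, joukowski; rewrite <- pow_inv.
  rewrite (cheb_pair_spec _ _ _ (fun n => (s ^ n + (/ s) ^ n) / 2)); simpl;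
    [reflexivity | field; exact Hs .. | intros m; simpl; field; exact Hs].
Qed.

Lemma chebU_joukowski (s : R) (n : nat) : s <> 0 -> s * s <> 1 ->
  chebU n (joukowski s) = (s ^ S n - / s ^ S n) / (s - / s).
Proof.
  intros Hs Hs1; pose proof (sub_inv_neq0 s Hs Hs1) as Hq.
  unfold chebU, joukowski; rewrite <- pow_inv.
  rewrite (cheb_pair_spec _ _ _ (fun n => (s ^ S n - (/ s) ^ S n) / (s - / s)));
    [reflexivity | simpl; field; split; [exact Hs | lra] ..
    | intros m; simpl; field; split; [exact Hs | lra]].
Qed.

Lemma prod_R_telescope (f g : nat -> R) (k : nat) :
  (forall j, g j <> 0) -> (forall j, f j = g j / g (S j)) ->
  prod_R f k = g 0%nat / g (S k).
Proof.
  intros Hg Hf; induction k as [|k IH]; cbn [prod_R]; rewrite Hf; [reflexivity|].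
  rewrite IH; field; auto.
Qed.

Lemma sum_f_R0_telescope (f h : nat -> R) (n : nat) :
  (forall k, f k = h (S k) - h k) -> sum_f_R0 f n = h (S n) - h 0%nat.
Proof.
  intros Hf; induction n as [|n IH]; cbn [sum_f_R0]; rewrite Hf; [|rewrite IH]; ring.
Qed.

Lemma Rabs_pow_le (t : R) (m : nat) : Rabs t < 1 -> (1 <= m)%nat ->
  Rabs (t ^ m) <= Rabs t.
Proof.
  intros Ht Hm; induction Hm as [|m Hm IH]; simpl.
  - rewrite Rmult_1_r; lra.
  - rewrite Rabs_mult; pose proof (Rabs_pos t); pose proof (Rabs_pos (t ^ m)); nra.
Qed.

Lemma Rabs_lt1_sqr (s : R) : Rabs s < 1 -> s * s < 1.
Proof.
  intros H; pose proof (pow2_abs s); pose proof (Rabs_pos s); nra.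
Qed.

Lemma add_le_succ_pow (n d : nat) : (1 <= d)%nat -> (n + d <= (d + 1) ^ S n)%nat.
Proof.
  intros Hd; induction n as [|n IH]; [simpl; lia|].
  rewrite Nat.pow_succ_r'; nia.
Qed.

Definition odds_ratio (v : R) : R := v ^ 2 / (1 - v ^ 2).

Lemma chebU_ratio_telescope (A c : R) :
  A <> 0 -> c <> 0 -> A * A <> 1 -> (A * c) * (A * c) <> 1 ->
  (c - / c) / (A - / A) / (A * c - / (A * c)) = odds_ratio (A * c) - odds_ratio A.
Proof.
  intros HA Hc HA1 HAc1; unfold odds_ratio.
  assert (HAc : A * c <> 0) by (apply Rmult_integral_contrapositive_currified; assumption).
  pose proof (sub_inv_neq0 A HA HA1); pose proof (sub_inv_neq0 _ HAc HAc1).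
  field; repeat split; auto; intro; nra.
Qed.

Section ChebyshevSum.
Variables (t : R) (d : nat).
Hypotheses (Ht0 : t <> 0) (Ht1 : Rabs t < 1) (Hd : (1 <= d)%nat).

Let a (j : nat) : R := t ^ ((d + 1) ^ j).

Lemma a_succ (j : nat) : a (S j) = a j * a j ^ d.
Proof.
  unfold a; rewrite <- pow_mult, <- pow_add, Nat.pow_succ_r'.
  f_equal; lia.
Qed.

Lemma a_neq0 (j : nat) : a j <> 0.
Proof. now apply pow_nonzero. Qed.

Lemma a_sqr_lt1 (j : nat) : a j * a j < 1.
Proof.
  apply Rabs_lt1_sqr, (Rle_lt_trans _ (Rabs t)); [|exact Ht1].
  apply Rabs_pow_le; [exact Ht1|].
  pose proof (Nat.pow_nonzero (d + 1) j); lia.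
Qed.

Lemma chebT_iterate (j : nat) : chebT ((d + 1) ^ j) (joukowski t) = joukowski (a j).
Proof. now rewrite chebT_joukowski. Qed.

Lemma inv_chebU_iterate (j : nat) :
  / chebU d (chebT ((d + 1) ^ j) (joukowski t)) = (a j - / a j) / (a (S j) - / a (S j)).
Proof.
  pose proof (a_sqr_lt1 j); pose proof (a_sqr_lt1 (S j)).
  pose proof (sub_inv_neq0 (a j) (a_neq0 j)); pose proof (sub_inv_neq0 _ (a_neq0 (S j))).
  rewrite chebT_iterate, chebU_joukowski, <- tech_pow_Rmult, <- a_succ by (apply a_neq0 || lra).
  field; repeat split; auto using a_neq0; lra.
Qed.

Lemma S_nd_telescope (n : nat) :
  S_nd n d (joukowski t) = (t - / t) * (odds_ratio (a (S n)) - odds_ratio t).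
Proof.
  assert (a0 : a 0%nat = t) by (unfold a; simpl; ring).
  unfold S_nd; rewrite (sum_f_R0_telescope _ (fun k => (t - / t) * odds_ratio (a k))), a0;
    [ring|intros k].
  rewrite (prod_R_telescope _ (fun j => a j - / a j)), a0; cycle 1.
  - intros j; apply sub_inv_neq0; [apply a_neq0|pose proof (a_sqr_lt1 j); lra].
  - exact inv_chebU_iterate.
  - pose proof (a_sqr_lt1 k); pose proof (a_sqr_lt1 (S k)).
    assert (Hc : a k ^ d <> 0) by (apply pow_nonzero, a_neq0).
    rewrite chebT_iterate, chebU_joukowski by (apply a_neq0 || lra).
    replace (S (d - 1)) with d by lia.
    rewrite <- Rmult_minus_distr_l, a_succ, <- chebU_ratio_telescope
      by (auto using a_neq0; try rewrite <- a_succ; lra).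
    field; rewrite <- a_succ; repeat split; auto using a_neq0; lra.
Qed.

Lemma S_nd_joukowski (n : nat) :
  S_nd n d (joukowski t) = t + (t - / t) * odds_ratio (a (S n)).
Proof.
  pose proof (Rabs_lt1_sqr t Ht1); pose proof (a_sqr_lt1 (S n)).
  rewrite S_nd_telescope; unfold odds_ratio.
  field; repeat split; auto; lra.
Qed.
End ChebyshevSum.

Lemma Rabs_odds_ratio_tail (t u : R) : t <> 0 -> Rabs u <= Rabs t < 1 ->
  Rabs ((t - / t) * odds_ratio u) <= Rabs u.
Proof.
  intros Ht [Hut Ht1]; unfold odds_ratio.
  pose proof (Rabs_pos_lt t Ht); pose proof (Rabs_pos u).
  assert (Hu1 : u ^ 2 < 1) by (rewrite <- pow2_abs; nra).
  assert (Ht2 : t ^ 2 < 1) by (rewrite <- pow2_abs; nra).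
  set (e := (t - / t) * (u ^ 2 / (1 - u ^ 2))).
  assert (He0 : e * t * (1 - u ^ 2) = - (u ^ 2 * (1 - t ^ 2)))
    by (unfold e; field; split; [lra | exact Ht]).
  assert (He : Rabs e * Rabs t * (1 - Rabs u ^ 2) = Rabs u ^ 2 * (1 - Rabs t ^ 2)).
  { rewrite !pow2_abs, <- (Rabs_pos_eq (1 - u ^ 2)), <- (Rabs_pos_eq (1 - t ^ 2)) by lra.
    rewrite <- !Rabs_mult, He0, Rabs_Ropp, Rabs_mult.
    now rewrite (Rabs_pos_eq (u ^ 2)) by apply pow2_ge_0. }
  assert (Hbound : Rabs u ^ 2 * (1 - Rabs t ^ 2) <= Rabs u * (Rabs t * (1 - Rabs u ^ 2))).
  { assert (0 <= Rabs u * (Rabs t - Rabs u) * (1 + Rabs t * Rabs u)) by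
      (apply Rmult_le_pos; [apply Rmult_le_pos|]; nra).
    nra. }
  assert (0 < Rabs t * (1 - Rabs u ^ 2)) by (rewrite pow2_abs; nra).
  apply (Rmult_le_reg_r (Rabs t * (1 - Rabs u ^ 2))); [assumption|].
  rewrite <- Rmult_assoc, He; exact Hbound.
Qed.

Lemma small_root_spec (x : R) : ~ (-1 <= x <= 1) ->
  let t := sgn x * (Rabs x - sqrt (x ^ 2 - 1)) in
  t <> 0 /\ Rabs t < 1 /\ x = joukowski t.
Proof.
  intros hx t.
  assert (Hx : x < -1 \/ 1 < x) by lra.
  assert (Hr : sqrt (x ^ 2 - 1) * sqrt (x ^ 2 - 1) = x ^ 2 - 1) by (apply sqrt_sqrt; nra).
  pose proof (sqrt_pos (x ^ 2 - 1)).
  assert (Hroot : t * t - 2 * x * t + 1 = 0 /\ 0 < Rabs t < 1).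
  { unfold t, sgn; destruct (Rlt_dec x 0).
    - rewrite Rabs_left by lra; rewrite Rabs_left by nra; split; nra.
    - rewrite Rabs_right by lra; rewrite Rabs_right by nra; split; nra. }
  destruct Hroot as [Hroot Ht].
  assert (Ht0 : t <> 0) by (intro E; rewrite E, Rabs_R0 in Ht; lra).
  repeat split; [exact Ht0 | lra |].
  unfold joukowski; field_simplify_eq; [lra | exact Ht0].
Qed.

Theorem corollary1p2 (x : R) (hx : ~ (-1 <= x <= 1)) :
  exists L : R,
    (forall eps : R, eps > 0 ->
       exists N : nat, forall n d : nat, (1 <= d)%nat -> (N <= n + d)%nat ->
         Rabs (S_nd n d x - L) < eps)
    /\ L = sgn x * (Rabs x - sqrt (x ^ 2 - 1)).
Proof.
  destruct (small_root_spec x hx) as (Ht0 & Ht1 & Hx).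
  set (t := sgn x * (Rabs x - sqrt (x ^ 2 - 1))) in *.
  exists t; split; [|reflexivity].
  intros eps Heps.
  destruct (pow_lt_1_zero t Ht1 eps Heps) as [N HN].
  exists N; intros n d Hd HNd.
  pose proof (add_le_succ_pow n d Hd).
  rewrite Hx, S_nd_joukowski by assumption.
  replace (t + _ - t) with ((t - / t) * odds_ratio (t ^ ((d + 1) ^ S n))) by ring.
  eapply Rle_lt_trans; [apply Rabs_odds_ratio_tail; [exact Ht0 | split; [|exact Ht1]]|].
  - apply Rabs_pow_le; [exact Ht1 | lia].
  - apply HN; lia.
Qed.
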